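(* Let $H$ be a hereditary artin algebra, $n\ge2$, and let $f=\{f^i\}_{i=1}^n\colon X\to Y$ be an irreducible morphism in $\mathbf{C_n}({\rm proj}\,H)$ with $X$ or $Y$ indecomposable. Then: (1) $f$ is of type (ret) if and only if ${\rm Ker}\,f\in\mathbf{C_n}({\rm proj}\,H)\setminus\{0\}$; (2) if $f$ is of type (ret-irred-sec), then ${\rm Ker}\,f=0$.
   Context: For an artin algebra $\Lambda$ and $n\ge 2$, $\mathbf{C_n}({\rm proj}\,\Lambda)$ is the full subcategory of the category of complexes of finitely generated right $\Lambda$-modules consisting of complexes $X=(X^i,d^i_X)$ with $X^i$ projective for all $i$ and $X^i=0$ for $i\notin\{1,\dots,n\}$; morphisms are chain maps $f=\{f^i\}$. Kernels and cokernels are computed degreewise (with induced differentials) in the category of complexes of modules. A morphism in $\mathbf{C_n}({\rm proj}\,\Lambda)$ is irreducible if it is neither a section nor a retraction, and whenever $f=gh$ then $h$ is a section or $g$ is a retraction. Every irreducible $f=\{f^i\}$ in $\mathbf{C_n}({\rm proj}\,\Lambda)$ is of one of the following types: (sec) every $f^i$ is a section in ${\rm proj}\,\Lambda$; (ret) every $f^i$ is a retraction in ${\rm proj}\,\Lambda$; (ret-irred-sec) there is $i$ with $f^i$ irreducible in ${\rm proj}\,\Lambda$, $f^j$ a section for all $j>i$ and $f^j$ a retraction for all $j<i$. *)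

From HB Require Import structures.
From mathcomp Require Import all_boot all_order all_algebra.
Set Implicit Arguments. Unset Strict Implicit. Unset Printing Implicit Defensive.
Import GRing.Theory.
Local Open Scope ring_scope.

Definition is_ideal (R : comPzRingType) (I : R -> Prop) : Prop :=
  I 0 /\ (forall x y, I x -> I y -> I (x + y)) /\ (forall r x, I x -> I (r * x)).

Definition artinian (R : comPzRingType) : Prop :=
  forall I : nat -> R -> Prop,
    (forall k, is_ideal (I k)) ->
    (forall k x, I k.+1 x -> I k x) ->
    exists N, forall k, (N <= k)%N -> forall x, I k x <-> I N x.

Definition fin_gen (A : pzRingType) (M : lmodType A) : Prop :=
  exists s : seq M, forall x : M,
    exists c : 'I_(size s) -> A, x = \sum_(i < size s) c i *: s`_i.

Definition artin_algebra (R : comPzRingType) (H : algType R) : Prop :=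
  artinian R /\ fin_gen H.

Definition projective (A : pzRingType) (P : lmodType A) : Prop :=
  forall (N M : lmodType A) (g : {linear N -> M}) (h : {linear P -> M}),
    (forall y : M, exists x : N, g x = y) ->
    exists k : {linear P -> N}, forall p, g (k p) = h p.

Definition in_proj (A : pzRingType) (P : lmodType A) : Prop :=
  fin_gen P /\ projective P.

(* hereditary: every submodule of a projective module is projective
   (right modules over H, i.e. left modules over H^c) *)
Definition hereditary (R : comPzRingType) (H : algType R) : Prop :=
  forall (M P : lmodType (H^c)%type) (i : {linear M -> P}),
    projective P -> injective i -> projective M.

Definition mod_section (A : pzRingType) (M N : lmodType A) (f : {linear M -> N}) :=
  exists g : {linear N -> M}, forall x, g (f x) = x.
Definition mod_retraction (A : pzRingType) (M N : lmodType A) (f : {linear M -> N}) :=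
  exists g : {linear N -> M}, forall y, f (g y) = y.
Definition mod_irreducible (A : pzRingType) (M N : lmodType A) (f : {linear M -> N}) :=
  ~ mod_section f /\ ~ mod_retraction f /\
  forall (Z : lmodType A) (h : {linear M -> Z}) (g : {linear Z -> N}),
    in_proj Z -> (forall x, f x = g (h x)) -> mod_section h \/ mod_retraction g.

(* Complexes are indexed by nat; degree i is X^i; X^i = 0 unless 1 <= i <= n
   (in particular degrees <= 0 of the Z-indexed complex are zero). *)
Record cplx (A : pzRingType) (n : nat) := Cplx {
  cobj : nat -> lmodType A;
  cdif : forall i, {linear cobj i -> cobj i.+1};
  cdd : forall i x, cdif i.+1 (cdif i x) = 0;
  cproj : forall i, in_proj (cobj i);
  cbound : forall i, (i < 1)%N \/ (n < i)%N -> forall x : cobj i, x = 0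
}.

Definition cmor (A : pzRingType) n (X Y : cplx A n) :=
  forall i, {linear cobj X i -> cobj Y i}.

Definition is_chain (A : pzRingType) n (X Y : cplx A n) (f : cmor X Y) : Prop :=
  forall i x, f i.+1 (cdif X i x) = cdif Y i (f i x).

Definition cx_section (A : pzRingType) n (X Y : cplx A n) (f : cmor X Y) :=
  exists g : cmor Y X, is_chain g /\ forall i x, g i (f i x) = x.
Definition cx_retraction (A : pzRingType) n (X Y : cplx A n) (f : cmor X Y) :=
  exists g : cmor Y X, is_chain g /\ forall i y, f i (g i y) = y.

Definition cx_irreducible (A : pzRingType) n (X Y : cplx A n) (f : cmor X Y) :=
  ~ cx_section f /\ ~ cx_retraction f /\
  forall (Z : cplx A n) (h : cmor X Z) (g : cmor Z Y),
    is_chain h -> is_chain g -> (forall i x, f i x = g i (h i x)) ->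
    cx_section h \/ cx_retraction g.

Definition cx_zero (A : pzRingType) n (X : cplx A n) : Prop :=
  forall i (x : cobj X i), x = 0.

Definition cx_indecomposable (A : pzRingType) n (X : cplx A n) : Prop :=
  ~ cx_zero X /\
  forall (X1 X2 : cplx A n) (i1 : cmor X1 X) (i2 : cmor X2 X)
         (p1 : cmor X X1) (p2 : cmor X X2),
    is_chain i1 -> is_chain i2 -> is_chain p1 -> is_chain p2 ->
    (forall i x, p1 i (i1 i x) = x) -> (forall i x, p2 i (i2 i x) = x) ->
    (forall i x, p1 i (i2 i x) = 0) -> (forall i x, p2 i (i1 i x) = 0) ->
    (forall i x, i1 i (p1 i x) + i2 i (p2 i x) = x) ->
    cx_zero X1 \/ cx_zero X2.

Definition type_ret (A : pzRingType) n (X Y : cplx A n) (f : cmor X Y) :=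
  forall i, mod_retraction (f i).
Definition type_ret_irred_sec (A : pzRingType) n (X Y : cplx A n) (f : cmor X Y) :=
  exists i, mod_irreducible (f i) /\
    (forall j, (i < j)%N -> mod_section (f j)) /\
    (forall j, (j < i)%N -> mod_retraction (f j)).

Definition is_kernel (A : pzRingType) (M N K : lmodType A)
    (g : {linear M -> N}) (k : {linear K -> M}) : Prop :=
  injective k /\ forall x, g x = 0 <-> exists y, k y = x.

Definition ker_in_Cn_nonzero (A : pzRingType) n (X Y : cplx A n) (f : cmor X Y) :=
  (forall i, exists (K : lmodType A) (k : {linear K -> cobj X i}),
      is_kernel (f i) k /\ in_proj K) /\
  exists i (x : cobj X i), f i x = 0 /\ x <> 0.

Definition ker_zero (A : pzRingType) n (X Y : cplx A n) (f : cmor X Y) :=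
  forall i x, f i x = 0 -> x = 0.

From HB Require Import structures.
From mathcomp Require Import all_boot all_order all_algebra.
From mathcomp Require Import boolp.

(* Factor f through its degreewise image: over a hereditary algebra the image
   of f is again a complex of projectives, so irreducibility makes either the
   corestriction X -> Im f a section (then f is a monomorphism) or the
   inclusion Im f -> Y a retraction (then every f^i is onto the projective
   Y^i, hence a retraction).  A degreewise retraction with zero kernel is a
   degreewise isomorphism, hence a retraction of complexes, which
   irreducibility forbids. *)

Set Implicit Arguments.
Unset Strict Implicit.
Unset Printing Implicit Defensive.
Import GRing.Theory.
Local Open Scope ring_scope.

Section LinearOf.
Variables (A : pzRingType) (U V : lmodType A) (g : U -> V) (lin_g : linear g).

(* A head constant depending on the linearity proof, on which the canonical
   linear structure of g can be keyed. *)
Definition linear_fun_of (_ : linear g) := g.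
HB.instance Definition _ :=
  GRing.isLinear.Build A U V *:%R (linear_fun_of lin_g) lin_g.
Definition linear_of : {linear U -> V} := linear_fun_of lin_g.

Lemma linear_ofE x : linear_of x = g x.
Proof. by []. Qed.

End LinearOf.
Arguments linear_of {A U V} g lin_g.

Definition submod_closedP (A : pzRingType) (M : lmodType A) (P : M -> Prop) :=
  [/\ P 0, forall x y, P x -> P y -> P (x + y) & forall a x, P x -> P (a *: x)].

Section Submodule.
Variables (A : pzRingType) (M : lmodType A) (P : M -> Prop).
Variable (closedP : submod_closedP P).

(* The submodule type is indexed by the closure proof so that its module
   structure, which depends on that proof, can be declared canonical. *)
Record submod (closed : submod_closedP P) := Submod {
  submod_val : M;
  submod_valP : `[< P submod_val >]
}.

HB.instance Definition _ := [isSub for (@submod_val closedP)].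
HB.instance Definition _ := [Choice of submod closedP by <:].

Lemma submod_subsemimod_closed : subsemimod_closed (fun x : M => `[< P x >]).
Proof.
case: closedP => P0 PD PZ; split; first split.
- exact/asboolP.
- by move=> x y /asboolP Px /asboolP Py; apply/asboolP; apply: PD.
- by move=> a x /asboolP Px; apply/asboolP; apply: PZ.
Qed.

HB.instance Definition _ := GRing.SubChoice_isSubLmodule.Build _ _ _
  (submod closedP) submod_subsemimod_closed.

Definition submod_incl : {linear submod closedP -> M} := val.

Lemma submod_incl_inj : injective submod_incl.
Proof. exact: val_inj. Qed.

Lemma submod_inclP (y : submod closedP) : P (submod_incl y).
Proof. exact/asboolP/submod_valP. Qed.

Variables (U : lmodType A) (g : {linear U -> M}) (gP : forall u, P (g u)).

Definition submod_corestr_fun (u : U) : submod closedP :=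
  Submod closedP (asboolT (gP u)).

Lemma submod_corestr_linear : linear submod_corestr_fun.
Proof. by move=> a x y; apply: submod_incl_inj; rewrite /= linearP. Qed.

Definition submod_corestr : {linear U -> submod closedP} :=
  linear_of _ submod_corestr_linear.

Lemma submod_corestrK u : submod_incl (submod_corestr u) = g u.
Proof. by []. Qed.

End Submodule.
Arguments submod_corestr {A M P} closedP {U} g gP.

Section Surjective.
Variables (A : pzRingType) (M N : lmodType A) (g : {linear M -> N}).

Lemma fin_gen_surjective : fin_gen M -> (forall y, exists x, g x = y) -> fin_gen N.
Proof.
move=> [s gen] g_onto; exists (map g s) => y.
have [x <-] := g_onto y; have [c ->] := gen x.
rewrite linear_sum size_map; exists c; apply: eq_bigr => i _.
by rewrite linearZ /= (nth_map 0).
Qed.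

Lemma projective_surjective_retraction :
  projective N -> (forall y, exists x, g x = y) -> mod_retraction g.
Proof.
move=> projN g_onto.
have [s gs] := projN _ _ g (linear_of id (fun _ _ _ => erefl)) g_onto.
by exists s.
Qed.

End Surjective.

Section ImageKernel.
Variables (A : pzRingType) (M N : lmodType A) (g : {linear M -> N}).

Lemma image_submod_closed : submod_closedP (fun y : N => exists x, g x = y).
Proof.
split; first by exists 0; rewrite linear0.
  by move=> _ _ [x <-] [y <-]; exists (x + y); rewrite linearD.
by move=> a _ [x <-]; exists (a *: x); rewrite linearZ.
Qed.

Lemma kernel_submod_closed : submod_closedP (fun x : M => g x = 0).
Proof.
split; first by rewrite linear0.
  by move=> x y gx gy; rewrite linearD gx gy addr0.
by move=> a x gx; rewrite linearZ /= gx scaler0.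
Qed.

Lemma is_kernel_submod : is_kernel g (submod_incl kernel_submod_closed).
Proof.
split; first exact: submod_incl_inj.
move=> x; split; last by move=> [y <-]; exact: (submod_inclP y).
by move=> gx; exists (@Submod _ _ _ kernel_submod_closed x (asboolT gx)).
Qed.

Lemma fin_gen_image : fin_gen M -> fin_gen (submod image_submod_closed).
Proof.
move=> fgM; apply: (fin_gen_surjective (g := submod_corestr _ g
  (fun x => ex_intro _ x erefl))) => // z.
have [x gx] := submod_inclP z; exists x; exact: submod_incl_inj.
Qed.

Lemma fin_gen_kernel_retraction :
  fin_gen M -> mod_retraction g -> fin_gen (submod kernel_submod_closed).
Proof.
move=> fgM [s gs].
have lin_q : linear (fun x => x - s (g x)).
  by move=> a u v; rewrite !linearP /= scalerBr scalerN addrACA.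
pose q := linear_of _ lin_q.
have gq x : g (q x) = 0 by rewrite /= linearB /= gs subrr.
apply: (fin_gen_surjective (g := submod_corestr _ q gq)) => // z.
exists (submod_incl _ z); apply: submod_incl_inj.
have gz : g (submod_incl _ z) = 0 := submod_inclP z.
by rewrite submod_corestrK linear_ofE gz linear0 subr0.
Qed.

End ImageKernel.

Lemma hereditary_submod_projective (R : comPzRingType) (H : algType R) :
  hereditary H -> forall (M : lmodType (H^c)%type) (P : M -> Prop)
    (closedP : submod_closedP P), projective M -> projective (submod closedP).
Proof.
move=> Hher M P closedP projM.
exact: (Hher _ _ (submod_incl closedP) projM (@submod_incl_inj _ _ _ closedP)).
Qed.

Section ImageComplex.
Variables (R : comPzRingType) (H : algType R) (Hher : hereditary H) (n : nat).
Local Notation A := (H^c)%type.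
Variables (X Y : cplx A n) (f : cmor X Y) (f_chain : is_chain f).

Local Notation im_closed i := (image_submod_closed (f i)).
Local Notation im_obj i := (submod (im_closed i)).

Lemma cdif_image i (z : im_obj i) :
  exists x, f i.+1 x = cdif Y i (submod_incl (im_closed i) z).
Proof. by have [x <-] := submod_inclP z; exists (cdif X i x). Qed.

Definition image_cdif i : {linear im_obj i -> im_obj i.+1} :=
  submod_corestr _ (cdif Y i \o submod_incl (im_closed i)) (@cdif_image i).

Lemma image_cdd i z : image_cdif i.+1 (image_cdif i z) = 0.
Proof. by apply: submod_incl_inj; rewrite !submod_corestrK /= cdd. Qed.

Lemma image_cproj i : in_proj (im_obj i).
Proof.
have [fgX _] := cproj X i; have [_ projY] := cproj Y i.
split; first exact: fin_gen_image.
exact: hereditary_submod_projective.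
Qed.

Lemma image_cbound i : (i < 1)%N \/ (n < i)%N -> forall z : im_obj i, z = 0.
Proof. by move=> hi z; apply: submod_incl_inj; rewrite linear0; apply: cbound. Qed.

Definition image_cplx : cplx A n := Cplx image_cdd image_cproj image_cbound.

Definition image_corestr : cmor X image_cplx :=
  fun i => submod_corestr _ (f i) (fun x => ex_intro _ x erefl).

Definition image_incl : cmor image_cplx Y := fun i => submod_incl (im_closed i).

Lemma image_corestr_chain : is_chain image_corestr.
Proof. by move=> i x; apply: submod_incl_inj; apply: f_chain. Qed.

Lemma image_incl_chain : is_chain image_incl.
Proof. by []. Qed.

Lemma cx_irreducible_ker_type_ret : cx_irreducible f -> ~ ker_zero f -> type_ret f.
Proof.
move=> [_ [_ irr]] /existsNP[i0] /existsNP[x0] /not_implyP[fx0 x0_neq0].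
have [[g [_ g_corestr]] | [g [_ incl_g]] i] :=
  irr image_cplx image_corestr image_incl image_corestr_chain image_incl_chain
      (fun i x => erefl).
  have corestr_x0 : image_corestr i0 x0 = 0.
    by apply: submod_incl_inj; rewrite linear0.
  by case: x0_neq0; rewrite -(g_corestr i0 x0) corestr_x0 linear0.
have [_ projY] := cproj Y i.
apply: projective_surjective_retraction projY _ => y.
rewrite -(incl_g i y); exact: (submod_inclP (g i y)).
Qed.

End ImageComplex.

Lemma type_ret_ker_zero_cx_retraction (A : pzRingType) n (X Y : cplx A n)
    (f : cmor X Y) :
  is_chain f -> type_ret f -> ker_zero f -> cx_retraction f.
Proof.
move=> f_chain f_ret f_ker0.
have f_inj i : injective (f i).
  by move=> a b fab; apply/eqP; rewrite -subr_eq0; apply/eqP/f_ker0;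
     rewrite linearB /= fab subrr.
pose g : cmor Y X := fun i => projT1 (cid (f_ret i)).
have fg i y : f i (g i y) = y by rewrite /g; case: cid.
exists g; split => [i y|//].
by apply: (f_inj i.+1); rewrite f_chain !fg.
Qed.

Lemma type_ret_ker_in_proj (R : comPzRingType) (H : algType R) n
    (X Y : cplx (H^c)%type n) (f : cmor X Y) :
  hereditary H -> type_ret f -> forall i, exists (K : lmodType (H^c)%type)
    (k : {linear K -> cobj X i}), is_kernel (f i) k /\ in_proj K.
Proof.
move=> Hher f_ret i.
exists (submod (kernel_submod_closed (f i))), (submod_incl _).
split; first exact: is_kernel_submod.
have [fgX projX] := cproj X i.
split; first exact: fin_gen_kernel_retraction.
exact: hereditary_submod_projective.
Qed.

Theorem proposition2p5 (R : comPzRingType) (H : algType R)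
  (Hart : artin_algebra H) (Hher : hereditary H)
  (n : nat) (hn : (2 <= n)%N)
  (X Y : cplx (H^c)%type n) (f : cmor X Y)
  (hchain : is_chain f) (hirr : cx_irreducible f)
  (hind : cx_indecomposable X \/ cx_indecomposable Y) :
  (type_ret f <-> ker_in_Cn_nonzero f) /\
  (type_ret_irred_sec f -> ker_zero f).
Proof.
have ker_ret := cx_irreducible_ker_type_ret Hher hchain hirr.
split; first split.
- move=> f_ret; split; first exact: type_ret_ker_in_proj.
  apply: contrapT => ker0; have [_ [not_ret _]] := hirr; apply: not_ret.
  apply: type_ret_ker_zero_cx_retraction => // i x fx.
  by apply: contrapT => x_neq0; apply: ker0; exists i, x.
- move=> [_ [i [x [fx x_neq0]]]]; apply: ker_ret => ker0.
  exact/x_neq0/ker0/fx.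
- move=> [i [[_ [not_ret _]] _]]; apply: contrapT => not_ker0.
  exact/not_ret/ker_ret.
Qed.
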